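(* Let $p_1(\lambda),\dots,p_k(\lambda)$ be scalar complex polynomials such that their greatest common divisor $q(\lambda)=\gcd(p_1(\lambda),\dots,p_k(\lambda))$ has simple roots. Then there exists a generic set $\Omega\subseteq\mathbb C^k$ such that for all $s=(s_1,\dots,s_k)\in\Omega$ the roots of the polynomial $s_1p_1(\lambda)+\cdots+s_kp_k(\lambda)$ are simple.
   Context: The greatest common divisor of several polynomials is defined recursively via $\gcd(p_1,\dots,p_k)=\gcd(\gcd(p_1,\dots,p_{k-1}),p_k)$, unique up to a nonzero constant. A set $\Omega\subseteq\mathbb C^k$ is generic if its complement is contained in an algebraic set (common zero set of finitely many polynomials) that is not all of $\mathbb C^k$. *)

(* The complex numbers are modelled as R[i] for an
   arbitrary R : realType (a complete archimedean ordered field, i.e. the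
   reals up to isomorphism), using the complex type of mathcomp-real-closed. *)
From HB Require Import structures.
From mathcomp Require Import all_boot all_order all_algebra.
From mathcomp Require Import reals.
From mathcomp.real_closed Require Import complex.
From mathcomp Require Import mpoly.
Set Implicit Arguments. Unset Strict Implicit. Unset Printing Implicit Defensive.
Import Order.TTheory GRing.Theory Num.Theory.
Local Open Scope ring_scope.

(* gcd(p_1,...,p_k) defined recursively: gcd(gcd(p_1..p_{k-1}), p_k),
   with gcd(p_1) = p_1 (since gcdp 0 p = p).  Unique up to a nonzero constant. *)
Definition gcd_family (F : fieldType) (k : nat) (p : 'I_k -> {poly F}) : {poly F} :=
  foldl (@gcdp F) 0 [seq p i | i <- enum 'I_k].

Definition simple_roots (F : fieldType) (q : {poly F}) : Prop :=
  q != 0 /\ forall x : F, root q x -> mup x q = 1%N.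

Definition in_alg_set (F : comNzRingType) (k : nat) (P : seq {mpoly F[k]})
    (x : 'I_k -> F) : Prop :=
  forall f, f \in P -> mpoly.meval x f = 0.

Definition generic (F : comNzRingType) (k : nat) (Omega : ('I_k -> F) -> Prop) : Prop :=
  exists P : seq {mpoly F[k]},
    (exists x, ~ in_alg_set P x) /\
    (forall s, ~ Omega s -> in_alg_set P s).

(* If a + t b has a double root x that is not a common double root of a and b,
   then either b(x) = 0 and t = -a'(x)/b'(x), or x is a root of the Wronskian
   w = a b' - a' b and t = -a(x)/b(x); if w = 0, a root of a + t b off the zeros
   of b forces a + t b = 0, so t = -lc(a)/lc(b).  Hence all but finitely many t
   are good, and adding the p_j one at a time gives s such that every double root
   of s_1 p_1 + ... + s_k p_k is a double root of every p_j, hence of q: there is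
   none.  For G = s_1 p_1 + ... + s_k p_k with indeterminate s, the polynomial
   G_n Res(G, G') in s (n the maximal degree) is nonzero at that s, and wherever
   it does not vanish, G is coprime to G', i.e. has simple roots. *)

From HB Require Import structures.
From mathcomp Require Import all_boot all_order all_algebra.
From mathcomp Require Import ring.
From mathcomp Require Import reals.
From mathcomp.real_closed Require Import complex.
From mathcomp Require Import mpoly.
From mathcomp Require Import separable.

Set Implicit Arguments.
Unset Strict Implicit.
Unset Printing Implicit Defensive.

Import Order.TTheory GRing.Theory Num.Theory.
Local Open Scope ring_scope.

Lemma sqrXsubC_dvdp (F : fieldType) (p : {poly F}) x :
  (('X - x%:P) ^+ 2 %| p) = root p x && root p^`() x.
Proof.
apply/idP/andP => [/dvdpP[q ->] | [/factor_theorem[q ->]]].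
  rewrite derivM deriv_exp derivXsubC !rootE !hornerE /= subrr.
  by rewrite !(expr1, add0r, subrr, mulr0, addr0, eqxx).
rewrite derivM derivXsubC mulr1 rootE !hornerE subrr mulr0 add0r.
by rewrite -rootE => /factor_theorem[r ->]; rewrite -mulrA -expr2 dvdp_mull.
Qed.

Lemma simple_roots_sqrXsubC (F : fieldType) (q : {poly F}) x :
  simple_roots q -> ~~ (('X - x%:P) ^+ 2 %| q).
Proof.
case=> q0 qs; apply/negP => dq; move: (dq); rewrite sqrXsubC_dvdp => /andP[qx _].
by move: dq; rewrite -mup_geq // qs.
Qed.

Lemma separable_simple_roots (F : fieldType) (q : {poly F}) :
  separable_poly q -> simple_roots q.
Proof.
move=> sq; have q0 := separable_poly_neq0 sq; split=> // x qx; apply/eqP.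
rewrite eqn_leq mup_leq // separable_nosquare ?size_XsubC //=.
by rewrite -XsubC_dvd // dvdp_XsubCl.
Qed.

Lemma separable_sqrXsubC (F : closedFieldType) (p : {poly F}) :
  (forall x, ~~ (('X - x%:P) ^+ 2 %| p)) -> separable_poly p.
Proof.
move=> nsq; rewrite unlock /coprimep; apply: contraT => /closed_rootP[x gx].
case/negP: (nsq x); rewrite sqrXsubC_dvdp.
by rewrite (root_dvdp (dvdp_gcdl _ _) gx) (root_dvdp (dvdp_gcdr _ _) gx).
Qed.

Lemma lt_size_coef (R : nzSemiRingType) (p : {poly R}) i : p`_i != 0 -> (i < size p)%N.
Proof. by move=> pi; rewrite ltnNge; apply: contra pi => /leq_sizeP->. Qed.

Lemma size_map_deriv (R : nzRingType) (S : numDomainType) (f : {rmorphism R -> S})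
    (p : {poly R}) :
  size (map_poly f p) = size p -> size (map_poly f p^`()) = size p^`().
Proof.
move=> fp; apply/eqP; rewrite eqn_leq map_polyE (leq_trans (size_Poly _)) ?size_map //=.
have le_p' : (size p^`() <= (size p).-1)%N.
  have [->|p0] := eqVneq p 0; first by rewrite deriv0 size_poly0.
  by rewrite -ltnS prednK ?lt_size_deriv ?size_poly_gt0.
rewrite -map_polyE -deriv_map (leq_trans le_p') // -fp.
case fpm: (size (map_poly f p)) => [|[|m]] //=.
apply: lt_size_coef; rewrite coef_deriv mulrn_eq0 /=.
have -> : (map_poly f p)`_m.+1 = lead_coef (map_poly f p) by rewrite lead_coefE fpm.
by rewrite lead_coef_eq0 -size_poly_eq0 fpm.
Qed.

Lemma rmorph_resultant (R S : nzRingType) (f : {rmorphism R -> S}) p q :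
    size (map_poly f p) = size p -> size (map_poly f q) = size q ->
  f (resultant p q) = resultant (map_poly f p) (map_poly f q).
Proof.
move=> fp fq; rewrite /resultant /Sylvester_mx fp fq -det_map_mx /= map_col_mx.
by congr (\det (col_mx _ _)); apply: map_lin1_mx => v;
  rewrite map_poly_rV rmorphM /= map_rVpoly.
Qed.

Lemma separable_resultant (R : idomainType) (p : {poly R}) :
  p != 0 -> separable_poly p = (resultant p p^`() != 0).
Proof.
move=> p0; rewrite unlock /coprimep resultant_eq0 -leqNgt eqn_leq.
by rewrite size_poly_gt0 gcdp_eq0 negb_and p0 andbT.
Qed.

(* With h = q (X - x)^(m+1) and q(x) != 0, the hypothesis reduces to
   (X - x) q b' = ((X - x) q' + (m+1) q) b, which fails at x in characteristic 0. *)
Lemma root_wronskian (R : numDomainType) (h b : {poly R}) x :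
  h * b^`() = h^`() * b -> ~~ root b x -> root h x -> h = 0.
Proof.
move=> W bx hx; apply/eqP/negPn/negP => h0.
have [m [q /(implyP)/(_ h0) qx hE]] := multiplicity_XsubC h x.
case: m hE => [|m] hE; first by move: hx; rewrite hE expr0 mulr1 (negbTE qx).
have : (q * ('X - x%:P) * b^`()) * ('X - x%:P) ^+ m
       = ((q^`() * ('X - x%:P) + q *+ m.+1) * b) * ('X - x%:P) ^+ m.
  move: W; rewrite hE derivM deriv_exp derivXsubC mul1r /= => W.
  transitivity (q * ('X - x%:P) ^+ m.+1 * b^`()); first by rewrite exprS; ring.
  by rewrite W exprS; ring.
move/mulIf; rewrite expf_neq0 ?polyXsubC_eq0 // => /(_ isT)/(congr1 (horner^~ x)).
rewrite !hornerE subrr !(mulr0, mul0r, add0r) => /esym/eqP.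
by rewrite hornerMn mulf_eq0 mulrn_eq0 /= -!rootE (negbTE bx) (negbTE qx).
Qed.

Lemma exists_notin (R : numDomainType) (s : seq R) : exists t, t \notin s.
Proof.
have le_sum (y : R) r : y \in r -> `|y| <= \sum_(z <- r) `|z|.
  elim: r => // z r IH; rewrite inE big_cons => /orP[/eqP-> | /IH yr].
    by rewrite lerDl sumr_ge0.
  by rewrite (le_trans yr) // lerDr.
exists (1 + \sum_(z <- s) `|z|); apply/negP => /le_sum.
by rewrite ger0_norm ?addr_ge0 ?sumr_ge0 // gerDr ler10.
Qed.

Lemma exists_seq_roots (F : closedFieldType) (p : {poly F}) :
  exists rs : seq F, p != 0 -> {subset root p <= rs}.
Proof.
have [rs prs] := closed_field_poly_normal p; exists rs => p0 x.
by rewrite unfold_in -rootE {1}prs rootZ ?lead_coef_eq0 // root_prod_XsubC.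
Qed.

Lemma pencil_sqrXsubC (F : numClosedFieldType) (a b : {poly F}) :
  exists bad : seq F, forall t, t \notin bad -> forall x,
    ('X - x%:P) ^+ 2 %| a + t *: b ->
    ('X - x%:P) ^+ 2 %| a /\ ('X - x%:P) ^+ 2 %| b.
Proof.
pose w := a * b^`() - a^`() * b.
have [rw rwP] := exists_seq_roots w; have [rb rbP] := exists_seq_roots b.
exists [:: - lead_coef a / lead_coef b & [seq - a.[x] / b.[x] | x <- rw]
          ++ [seq - a^`().[x] / b^`().[x] | x <- rb]].
move=> t; rewrite inE mem_cat !negb_or => /and3P[ta tw tb] x.
rewrite !sqrXsubC_dvdp derivD derivZ !rootE !hornerE !addr_eq0.
case/andP=> /eqP ax /eqP a'x.
have [bx0|bx] := eqVneq b.[x] 0.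
  have [b'x0|b'x] := eqVneq b^`().[x] 0.
    by rewrite ax a'x bx0 b'x0 !mulr0 oppr0 !eqxx.
  case/negP: tb; apply/mapP; exists x; last by rewrite a'x opprK mulfK.
  apply: rbP; last by rewrite rootE bx0.
  by apply: contraNneq b'x => ->; rewrite deriv0 horner0.
have [w0|wx] := eqVneq w 0.
  have b0 : b != 0 by apply: contraNneq bx => ->; rewrite horner0.
  have /eqP : a + t *: b = 0.
    apply: (root_wronskian (b := b) (x := x)); last by rewrite rootE !hornerE ax addNr.
      apply/eqP; rewrite -subr_eq0; apply/eqP.
      by rewrite -w0 /w derivD derivZ -!mul_polyC; ring.
    by rewrite rootE bx.
  rewrite addr_eq0 => /eqP aE; case/negP: ta.
  by rewrite aE lead_coefN lead_coefZ opprK mulfK ?lead_coef_eq0.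
case/negP: tw; apply/mapP; exists x; last by rewrite ax opprK mulfK.
apply: rwP; rewrite // rootE /w !hornerE ax a'x.
by apply/eqP; ring.
Qed.

Lemma exists_lincomb_sqrXsubC (F : numClosedFieldType) k (p : 'I_k -> {poly F}) n :
  exists t : 'I_k -> F,
    (forall x, ('X - x%:P) ^+ 2 %| \sum_(j < k) t j *: p j ->
       forall j, ('X - x%:P) ^+ 2 %| p j) /\
    ((exists j, (p j)`_n != 0) -> (\sum_(j < k) t j *: p j)`_n != 0).
Proof.
elim: k p => [|k IH] p; first by exists (fun=> 0); split=> [x _ [] | [[]]].
have [t' [t'sqr t'coef]] := IH (fun j => p (lift ord0 j)).
set h := \sum_(j < k) t' j *: p (lift ord0 j).
have [bad badP] := pencil_sqrXsubC h (p ord0).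
have [t0] := exists_notin (- h`_n / (p ord0)`_n :: bad).
rewrite inE negb_or => /andP[t0n t0bad].
exists (fun j => if unlift ord0 j is Some j' then t' j' else t0).
rewrite big_ord_recl unlift_none (eq_bigr (fun j => t' j *: p (lift ord0 j))); last first.
  by move=> j _; rewrite liftK.
rewrite addrC -/h; split=> [x /(badP _ t0bad x)[/t'sqr hx p0x] j | [j pjn]].
  by case: (unliftP ord0 j) => [j'|] ->.
rewrite coefD coefZ; have [p0n|p0n] := eqVneq (p ord0)`_n 0.
  rewrite p0n mulr0 addr0; apply: t'coef.
  by case: (unliftP ord0 j) pjn => [j'|] -> pjn; [exists j' | rewrite p0n eqxx in pjn].
by apply: contra t0n; rewrite addr_eq0 => /eqP->; rewrite opprK mulfK.
Qed.

Lemma dvdp_gcd_family (F : fieldType) k (p : 'I_k -> {poly F}) d :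
  (forall j, d %| p j) -> d %| gcd_family p.
Proof.
rewrite /gcd_family => dp; elim: (enum 'I_k) 0 (dvdp0 d) => //= j s IH acc dacc.
by apply: IH; rewrite dvdp_gcd dacc dp.
Qed.

Lemma gcd_family_eq0 (F : fieldType) k (p : 'I_k -> {poly F}) :
  (forall j, p j = 0) -> gcd_family p = 0.
Proof. by move=> p0; apply/eqP; rewrite -dvd0p; apply: dvdp_gcd_family => j; rewrite p0. Qed.

Lemma exists_max_coef (R : nzSemiRingType) k (p : 'I_k -> {poly R}) j0 :
  p j0 != 0 ->
  exists n, (forall j, (size (p j) <= n.+1)%N) /\ exists j, (p j)`_n != 0.
Proof.
move=> pj0; have [|jm maxE] := bigop.eq_bigmax (fun j => size (p j)).
  by apply/card_gt0P; exists j0.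
have pjm : p jm != 0.
  by rewrite -size_poly_gt0 -maxE (leq_trans _ (bigop.leq_bigmax j0)) ?size_poly_gt0.
exists (size (p jm)).-1; split; last by exists jm; rewrite -lead_coefE lead_coef_eq0.
by move=> j; rewrite prednK ?size_poly_gt0 // -maxE (bigop.leq_bigmax j).
Qed.

Section GenericCombination.
Variables (F : numDomainType) (k : nat) (p : 'I_k -> {poly F}).

Definition generic_lincomb : {poly {mpoly F[k]}} :=
  \sum_(j < k) 'X_j *: map_poly (fun c => c%:MP) (p j).

Lemma meval_generic_lincomb s :
  map_poly (meval s) generic_lincomb = \sum_(j < k) s j *: p j.
Proof.
rewrite raddf_sum; apply: eq_bigr => j _; rewrite /= map_polyZ /= mevalXU.
by rewrite -map_poly_comp; congr (_ *: _); apply: map_poly_id => c _ /=; rewrite mevalC.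
Qed.

Variable n : nat.

(* Specializing commutes with the resultant only while the degree does not
   drop, hence the factor G_n. *)
Definition lincomb_disc : {mpoly F[k]} :=
  generic_lincomb`_n * resultant generic_lincomb generic_lincomb^`().

Hypothesis size_p : forall j, (size (p j) <= n.+1)%N.

Lemma meval_lincomb_disc s (f := \sum_(j < k) s j *: p j) :
  f`_n != 0 -> meval s lincomb_disc = f`_n * resultant f f^`().
Proof.
move=> fn; have fE := meval_generic_lincomb s.
have size_generic : (size generic_lincomb <= n.+1)%N.
  apply/leq_sizeP => i ni; rewrite coef_sum big1 // => j _.
  by rewrite coefZ coef_map /= nth_default ?mulr0 // (leq_trans (size_p j)).
have size_meval : size (map_poly (meval s) generic_lincomb) = size generic_lincomb.
  apply/eqP; rewrite eqn_leq map_polyE (leq_trans (size_Poly _)) ?size_map //=.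
  by rewrite -map_polyE fE (leq_trans size_generic) ?lt_size_coef.
rewrite /lincomb_disc mevalM -coef_map fE.
by rewrite (rmorph_resultant size_meval (size_map_deriv size_meval)) -deriv_map fE.
Qed.

Lemma lincomb_disc_neq0 s (f := \sum_(j < k) s j *: p j) :
  (meval s lincomb_disc != 0) = (f`_n != 0) && separable_poly f.
Proof.
have [fn0|fn] := eqVneq f`_n 0.
  by rewrite /lincomb_disc mevalM -coef_map meval_generic_lincomb -/f fn0 mul0r eqxx.
have f0 : f != 0 by apply: contraNneq fn => ->; rewrite coef0.
by rewrite meval_lincomb_disc // mulf_eq0 negb_or fn separable_resultant.
Qed.

End GenericCombination.

Theorem lemmaA1 (R : realType) (k : nat) (p : 'I_k -> {poly R[i]}) :
  simple_roots (gcd_family p) ->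
  exists Omega : ('I_k -> R[i]) -> Prop,
    generic Omega /\
    forall s : 'I_k -> R[i], Omega s -> simple_roots (\sum_(j < k) s j *: p j).
Proof.
move=> q_simple; have [q0 _] := q_simple.
have [j0 pj0] : exists j, p j != 0.
  apply/existsP; apply: contraR q0 => /existsPn p0.
  by apply/eqP/gcd_family_eq0 => j; apply/eqP/negbNE/p0.
have [n [size_p p_n]] := exists_max_coef pj0.
have [t [t_sqr t_n]] := exists_lincomb_sqrXsubC p n.
exists (fun s => meval s (lincomb_disc p n) != 0); split; last first.
  by move=> s; rewrite lincomb_disc_neq0 // => /andP[_ /separable_simple_roots].
exists [:: lincomb_disc p n]; split; last first.
  by move=> s Ds f; rewrite inE => /eqP->; apply/eqP/negPn/negP.
exists t => /(_ _ (mem_head _ _))/eqP; apply/negP.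
rewrite lincomb_disc_neq0 // t_n //=; apply: separable_sqrXsubC => x.
apply: contraNN (simple_roots_sqrXsubC x q_simple) => /t_sqr sqr_p.
exact: dvdp_gcd_family.
Qed.
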